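(* Let $L\ge1$ and for $l=1,\ldots,L$ let $\mathcal{E}^{l}=\{\eta_{i}^{l},\rho_{i}^{l}\}_{i\in\mathbb{N}_{n_{l}}}$ be an ensemble on a finite-dimensional Hilbert space $\mathcal{H}_l$, and let $\mathcal{M}^{l}=\{M_{?}^{l}\}\cup\{M_{i}^{l}\}_{i\in\mathbb{N}_{n_{l}}}$ be a maximum-confidence measurement of $\mathcal{E}^{l}$. Let $\mathcal{M}=\{M_{?}\}\cup\{M_{\vec c}\}_{\vec c\in\mathbb{N}_{\vec n}}$ be a measurement on $\bigotimes_l\mathcal{H}_l$ such that $M_{\vec c}=M^{1}_{c_1}\otimes\cdots\otimes M^{L}_{c_L}$ for every $\vec c=(c_1,\ldots,c_L)\in\mathbb{N}_{\vec n}$. Then $\mathcal{M}$ is a maximum-confidence measurement of the quantum sequence ensemble $\mathcal{E}=\bigotimes_{l=1}^{L}\mathcal{E}^{l}$.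
   Context: $\mathbb{N}_{n}=\{1,\ldots,n\}$, $\mathbb{N}_{\vec n}=\mathbb{N}_{n_1}\times\cdots\times\mathbb{N}_{n_L}$. An ensemble $\mathcal{E}=\{\eta_{i},\rho_{i}\}_{i\in I}$ (finite index set $I$) on a finite-dimensional complex Hilbert space: density operators $\rho_i$ with probabilities $\eta_i>0$ summing to $1$; $\rho_0=\sum_i\eta_i\rho_i$. A measurement is $\{M_{?}\}\cup\{M_{i}\}_{i\in I}$, positive-semidefinite operators summing to the identity. $\mathcal{C}_{x}(\mathcal{E})$ is the maximum of $\eta_{x}\Tr(\rho_{x}M_{x})/\Tr(\rho_{0}M_{x})$ over measurements with $\Tr(\rho_{0}M_{x})>0$. A measurement is a maximum-confidence measurement of $\mathcal{E}$ if $\Tr[(\mathcal{C}_{i}(\mathcal{E})\rho_{0}-\eta_{i}\rho_{i})M_i]=0$ for all $i\in I$. The quantum sequence ensemble $\bigotimes_l\mathcal{E}^l$ is the ensemble on $\bigotimes_l\mathcal{H}_l$ indexed by $\mathbb{N}_{\vec n}$ with $\eta_{\vec c}=\prod_l\eta^l_{c_l}$, $\rho_{\vec c}=\bigotimes_l\rho^l_{c_l}$. *)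

From HB Require Import structures.
From mathcomp Require Import all_boot all_order all_algebra.
From mathcomp Require Import reals.
From mathcomp Require Export complex.
Set Implicit Arguments. Unset Strict Implicit. Unset Printing Implicit Defensive.
Import Order.TTheory GRing.Theory Num.Theory.
Local Open Scope ring_scope.

Section Quantum.
Variable C : numClosedFieldType.

(* Operators on the Hilbert space C^T, T a finite basis index type. *)
Definition op (T : finType) := T -> T -> C.

Definition op_mul (T : finType) (A B : op T) : op T :=
  fun i j => \sum_(k : T) A i k * B k j.
Definition op_add (T : finType) (A B : op T) : op T := fun i j => A i j + B i j.
Definition op_scale (T : finType) (a : C) (A : op T) : op T := fun i j => a * A i j.
Definition op_id (T : finType) : op T := fun i j => (i == j)%:R.
Definition op_tr (T : finType) (A : op T) : C := \sum_(i : T) A i i.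

(* positive semidefinite: <v, A v> >= 0 for all v (in a numClosedField,
   0 <= z means z is real and nonnegative). *)
Definition psd (T : finType) (A : op T) : Prop :=
  forall v : T -> C, 0 <= \sum_(i : T) \sum_(j : T) (v i)^* * A i j * v j.

Definition density (T : finType) (rho : op T) : Prop :=
  psd rho /\ op_tr rho = 1.

Definition ensemble (I T : finType) (eta : I -> C) (rho : I -> op T) : Prop :=
  (forall i, 0 < eta i) /\ \sum_(i : I) eta i = 1 /\ (forall i, density (rho i)).

Definition avg_state (I T : finType) (eta : I -> C) (rho : I -> op T) : op T :=
  fun a b => \sum_(i : I) eta i * rho i a b.

(* A measurement {M_?} u {M_i}_{i in I}: M None is M_?, M (Some i) is M_i. *)
Definition measurement (I T : finType) (M : option I -> op T) : Prop :=
  (forall o, psd (M o)) /\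
  (forall a b, \sum_(o : option I) M o a b = op_id a b).

Definition is_max_confidence (I T : finType) (eta : I -> C) (rho : I -> op T)
    (x : I) (c : C) : Prop :=
  (exists M : option I -> op T, measurement M /\
      0 < op_tr (op_mul (avg_state eta rho) (M (Some x))) /\
      eta x * op_tr (op_mul (rho x) (M (Some x))) /
        op_tr (op_mul (avg_state eta rho) (M (Some x))) = c) /\
  (forall M : option I -> op T, measurement M ->
      0 < op_tr (op_mul (avg_state eta rho) (M (Some x))) ->
      eta x * op_tr (op_mul (rho x) (M (Some x))) /
        op_tr (op_mul (avg_state eta rho) (M (Some x))) <= c).

Definition max_confidence_measurement (I T : finType) (eta : I -> C)
    (rho : I -> op T) (M : option I -> op T) : Prop :=
  measurement M /\
  forall i : I, exists c : C, is_max_confidence eta rho i c /\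
    op_tr (op_mul (op_add (op_scale c (avg_state eta rho))
                          (op_scale (- eta i) (rho i))) (M (Some i))) = 0.

(* Tensor products over l in 'I_L; the basis of (x)_l H_l is indexed by
   {dffun forall l, 'I_(d l)}. *)
Definition tensor_op (L : nat) (d : 'I_L -> nat) (A : forall l, op 'I_(d l))
    : op {dffun forall l : 'I_L, 'I_(d l)} :=
  fun a b => \prod_(l : 'I_L) A l (a l) (b l).

Definition seq_eta (L : nat) (n : 'I_L -> nat) (eta : forall l, 'I_(n l) -> C)
    (c : {dffun forall l : 'I_L, 'I_(n l)}) : C :=
  \prod_(l : 'I_L) eta l (c l).

Definition seq_rho (L : nat) (n d : 'I_L -> nat)
    (rho : forall l, 'I_(n l) -> op 'I_(d l))
    (c : {dffun forall l : 'I_L, 'I_(n l)}) : op {dffun forall l : 'I_L, 'I_(d l)} :=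
  tensor_op (fun l => rho l (c l)).

End Quantum.

(* For a single ensemble, [c] bounds the confidence of outcome [x] exactly when the gap
   operator [c rho_0 - eta_x rho_x] is positive semidefinite: if it is, [Tr (D M_x) >= 0]
   for every positive [M_x]; conversely, testing [c] against the two-outcome measurement
   [{|v><v| / <v, v>, 1 - |v><v| / <v, v>}] gives [<v, D v> >= 0].  By the Schur product
   theorem the tensor product is monotone for the Loewner order on positive operators, so
   the positive gaps of the factors give a positive gap for the sequence ensemble at
   [prod_l C_(c_l)], while the product of measurements attaining each [C_(c_l)] attains this
   value.  Hence [C_c] is that product, and the condition [Tr (D_c M_c) = 0] factorises over
   [l] for [M_c = (x)_l M_(c_l)].  Positivity is handled through Gram decompositions
   [A = sum_f |f><f|], obtained by Cholesky elimination. *)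

From mathcomp Require Import all_boot all_order all_algebra.
From mathcomp Require Import reals complex.
From mathcomp Require Import ring.
From Stdlib Require Import FunctionalExtensionality IndefiniteDescription ChoiceFacts.
Set Implicit Arguments.
Unset Strict Implicit.
Unset Printing Implicit Defensive.
Import Order.TTheory GRing.Theory Num.Theory.
Local Open Scope ring_scope.

Section PsdOperators.
Variables (C : numClosedFieldType) (T : finType).
Implicit Types (A B : op C T) (u v w : T -> C) (a b : C) (s : seq (T -> C)).

Definition op_form A u v : C := \sum_i \sum_j (u i)^* * A i j * v j.
Definition vdot u v : C := \sum_i (u i)^* * v i.
Definition basis_vec (p : T) : T -> C := fun k => (k == p)%:R.
Definition gram s : op C T := fun i j => \sum_(f <- s) f i * (f j)^*.
Definition op_sub A B : op C T := fun i j => A i j - B i j.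

Lemma op_ext A B : (forall i j, A i j = B i j) -> A = B.
Proof.
by move=> e; apply: functional_extensionality => i; apply: functional_extensionality.
Qed.

Lemma op_formD A B u v : op_form (op_add A B) u v = op_form A u v + op_form B u v.
Proof.
rewrite /op_form -big_split; apply: eq_bigr => i _; rewrite -big_split.
by apply: eq_bigr => j _; rewrite mulrDr mulrDl.
Qed.

Lemma op_formB A B u v : op_form (op_sub A B) u v = op_form A u v - op_form B u v.
Proof.
rewrite /op_form -sumrB; apply: eq_bigr => i _; rewrite -sumrB.
by apply: eq_bigr => j _; rewrite mulrBr mulrBl.
Qed.

Lemma op_formZ a A u v : op_form (op_scale a A) u v = a * op_form A u v.
Proof.
rewrite /op_form mulr_sumr; apply: eq_bigr => i _; rewrite mulr_sumr.
by apply: eq_bigr => j _; rewrite /op_scale mulrCA !mulrA.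
Qed.

Lemma op_form_sum (I : finType) (P : pred I) (F : I -> op C T) u v :
  op_form (fun i j => \sum_(k | P k) F k i j) u v = \sum_(k | P k) op_form (F k) u v.
Proof.
rewrite /op_form [RHS]exchange_big /=; apply: eq_bigr => i _.
rewrite [RHS]exchange_big /=; apply: eq_bigr => j _.
by rewrite mulr_sumr mulr_suml.
Qed.

Lemma op_form_expand A a b u w :
  op_form A (fun i => a * u i + b * w i) (fun i => a * u i + b * w i) =
  a^* * a * op_form A u u + a^* * b * op_form A u w
  + b^* * a * op_form A w u + b^* * b * op_form A w w.
Proof.
rewrite /op_form !big_distrr -!big_split; apply: eq_bigr => i _ /=.
rewrite !big_distrr -!big_split; apply: eq_bigr => j _ /=.
rewrite rmorphD !rmorphM /=; ring.
Qed.

Lemma op_form_rank1 (x y : T -> C) u v :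
  op_form (fun i j => x i * y j) u v = (\sum_i (u i)^* * x i) * (\sum_j y j * v j).
Proof.
rewrite /op_form mulr_suml; apply: eq_bigr => i _; rewrite mulr_sumr.
by apply: eq_bigr => j _; rewrite !mulrA.
Qed.

Lemma sum_basis_vecl p (F : T -> C) : \sum_k basis_vec p k * F k = F p.
Proof.
rewrite (bigD1 p) //= big1 ?addr0 => [|k /negbTE kp]; last first.
  by rewrite /basis_vec kp mul0r.
by rewrite /basis_vec eqxx mul1r.
Qed.

Lemma op_form_basisl A p v : op_form A (basis_vec p) v = \sum_j A p j * v j.
Proof.
rewrite /op_form -(sum_basis_vecl p (fun i => \sum_j A i j * v j)).
apply: eq_bigr => i _; rewrite big_distrr; apply: eq_bigr => j _.
by rewrite /basis_vec rmorph_nat -mulrA.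
Qed.

Lemma op_form_basisr A u q : op_form A u (basis_vec q) = \sum_i (u i)^* * A i q.
Proof.
apply: eq_bigr => i _; under eq_bigr do rewrite mulrC.
by rewrite sum_basis_vecl mulrC.
Qed.

Lemma op_form_basis A p q : op_form A (basis_vec p) (basis_vec q) = A p q.
Proof.
by rewrite op_form_basisl; under eq_bigr do rewrite mulrC; rewrite sum_basis_vecl.
Qed.

Lemma vdot_conj u v : (vdot u v)^* = vdot v u.
Proof.
by rewrite rmorph_sum; apply: eq_bigr => i _; rewrite rmorphM /= conjCK mulrC.
Qed.

Lemma vdot_eq0 v : vdot v v = 0 -> forall i, v i = 0.
Proof.
move=> v0 i; have ge0 k : true -> 0 <= (v k)^* * v k by rewrite mulrC mul_conjC_ge0.
have /eqP := psumr_eq0P ge0 v0 (i := i) isT.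
by rewrite mulf_eq0 conjC_eq0 orbb => /eqP.
Qed.

Lemma op_form_id u v : op_form (@op_id C T) u v = vdot u v.
Proof.
apply: eq_bigr => i _; rewrite (bigD1 i) //= /op_id eqxx mulr1 big1 ?addr0 //.
by move=> j /negbTE ji; rewrite eq_sym ji mulr0 mul0r.
Qed.

Lemma op_form_gram s u v : op_form (gram s) u v = \sum_(f <- s) vdot u f * vdot f v.
Proof.
rewrite /op_form /gram.
under eq_bigr do under eq_bigr do rewrite mulr_sumr mulr_suml.
under eq_bigr do rewrite exchange_big.
rewrite exchange_big; apply: eq_bigr => f _.
rewrite -op_form_rank1; apply: eq_bigr => i _; apply: eq_bigr => j _; ring.
Qed.

Lemma psd_form A v : psd A -> 0 <= op_form A v v.
Proof. by move=> /(_ v). Qed.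

Lemma psd0 : psd (fun _ _ : T => 0 : C).
Proof. by move=> v; rewrite big1 // => i _; rewrite big1 // => j _; rewrite mulr0 mul0r. Qed.

Lemma psd_add A B : psd A -> psd B -> psd (op_add A B).
Proof. by move=> hA hB v; rewrite -/(op_form _ v v) op_formD addr_ge0 ?psd_form. Qed.

Lemma psd_scale a A : 0 <= a -> psd A -> psd (op_scale a A).
Proof. by move=> ha hA v; rewrite -/(op_form _ v v) op_formZ mulr_ge0 ?psd_form. Qed.

Lemma psd_sum (I : finType) (P : pred I) (F : I -> op C T) :
  (forall k, P k -> psd (F k)) -> psd (fun i j => \sum_(k | P k) F k i j).
Proof.
move=> hF v; rewrite -/(op_form _ v v) op_form_sum.
by apply: sumr_ge0 => k /hF; apply: psd_form.
Qed.

Lemma psd_id : psd (@op_id C T).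
Proof.
move=> v; rewrite -/(op_form _ v v) op_form_id.
by apply: sumr_ge0 => i _; rewrite mulrC mul_conjC_ge0.
Qed.

Lemma psd_gram s : psd (gram s).
Proof.
move=> v; rewrite -/(op_form _ v v) op_form_gram.
by apply: sumr_ge0 => f _; rewrite -[vdot f v]vdot_conj mul_conjC_ge0.
Qed.

Lemma psd_diag_ge0 A p : psd A -> 0 <= A p p.
Proof. by move=> hA; rewrite -op_form_basis; apply: psd_form. Qed.

Lemma psd_adjoint A i j : psd A -> A j i = (A i j)^*.
Proof.
move=> hA; set z := A i j; set w := A j i.
have form_real b : let x k := 1 * basis_vec i k + b * basis_vec j k in
    (op_form A x x)^* = op_form A x x.
  by move=> x; apply/geC0_conj/psd_form.
have := form_real 'i; have := form_real 1; rewrite /= !op_form_expand !op_form_basis.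
rewrite !rmorphD !rmorphM /= !rmorph1 conjCK conjCi.
rewrite (geC0_conj (psd_diag_ge0 i hA)) (geC0_conj (psd_diag_ge0 j hA)) -/z -/w.
move=> /eqP; rewrite -subr_eq0; set X1 := (_ - _) => /eqP X1_0.
move=> /eqP; rewrite -subr_eq0; set Xi := (_ - _) => /eqP Xi_0.
(* [X1 = 0] and [Xi = 0] say that [z + w] and ['i * (z - w)] are real. *)
have : 2 * (w^* - z) = X1 - 'i * Xi - ('i * 'i + 1) * (z^* - w^* + z - w).
  by rewrite /X1 /Xi; ring.
rewrite X1_0 Xi_0 mulCii addNr mulr0 mul0r !subr0 => /eqP.
by rewrite mulf_eq0 pnatr_eq0 subr_eq0 => /eqP <-; rewrite conjCK.
Qed.

Lemma psd_row0 A p j : psd A -> A p p = 0 -> A p j = 0.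
Proof.
move=> hA App0; set a := A p j; have [//|a0] := eqVneq a 0.
have ac0 : a^* != 0 by rewrite conjC_eq0.
have kc : (A j j + 1)^* = A j j + 1 by rewrite geC0_conj // addr_ge0 ?psd_diag_ge0.
set t := - ((A j j + 1) / (2 * a^*)).
(* The form at [t e_p + e_j] is [-1]. *)
have := psd_form (fun x => t * basis_vec p x + 1 * basis_vec j x) hA.
rewrite op_form_expand !op_form_basis App0 (psd_adjoint p j hA) -/a.
have -> : t^* * t * 0 + t^* * 1 * a + 1^* * t * a^* + 1^* * 1 * A j j = -1.
  rewrite /t rmorphN rmorphM fmorphV rmorphM /= kc conjCK rmorph_nat rmorph1.
  by field; rewrite a0 andbT; exact: ac0.
by rewrite ler0N1.
Qed.

Lemma op_form_cauchy_schwarz A u v : psd A ->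
  op_form A u v * op_form A v u / op_form A v v <= op_form A u u.
Proof.
move=> hA; have [->|vv0] := eqVneq (op_form A v v) 0.
  by rewrite invr0 mulr0 psd_form.
have vvc : (op_form A v v)^* = op_form A v v by apply/geC0_conj/psd_form.
set t := - (op_form A v u / op_form A v v).
have := psd_form (fun i => 1 * u i + t * v i) hA.
rewrite op_form_expand.
have -> : 1^* * 1 * op_form A u u + 1^* * t * op_form A u v + t^* * 1 * op_form A v u
          + t^* * t * op_form A v v
        = op_form A u u - op_form A u v * op_form A v u / op_form A v v.
  by rewrite /t rmorphN rmorphM fmorphV /= vvc rmorph1; field.
by rewrite subr_ge0.
Qed.

Lemma psd_id_sub_rank1 v : psd (op_sub (@op_id C T) (op_scale (vdot v v)^-1 (gram [:: v]))).
Proof.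
move=> u; rewrite -/(op_form _ u u) op_formB op_formZ op_form_gram big_seq1 subr_ge0.
by rewrite -!op_form_id mulrC; apply: op_form_cauchy_schwarz; apply: psd_id.
Qed.

(* One step of Cholesky elimination at the pivot [p]; for [A p p = 0] the vector is
   [0], since [x / 0 = 0]. *)
Definition pivot_vec A p : T -> C := fun i => A i p / sqrtC (A p p).

Lemma gram_pivot_vec A p i j : psd A ->
  gram [:: pivot_vec A p] i j = A i p * A p j / A p p.
Proof.
move=> hA; rewrite /gram big_seq1 /pivot_vec rmorphM fmorphV /= -psd_adjoint //.
rewrite geC0_conj ?sqrtC_ge0 ?psd_diag_ge0 //.
by rewrite mulrACA -invfM -expr2 sqrtCK.
Qed.

Lemma psd_sub_pivot A p : psd A -> psd (op_sub A (gram [:: pivot_vec A p])).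
Proof.
move=> hA v; rewrite -/(op_form _ v v) op_formB subr_ge0.
have -> : gram [:: pivot_vec A p] = fun i j => A i p * (A p j / A p p).
  by apply: op_ext => i j; rewrite gram_pivot_vec // mulrA.
rewrite op_form_rank1 -op_form_basisr.
have -> : \sum_j A p j / A p p * v j
        = op_form A (basis_vec p) v / op_form A (basis_vec p) (basis_vec p).
  by rewrite op_form_basisl op_form_basis mulr_suml; apply: eq_bigr => j _; rewrite mulrAC.
by rewrite mulrA op_form_cauchy_schwarz.
Qed.

Lemma sub_pivot_row0 A p j : psd A -> op_sub A (gram [:: pivot_vec A p]) p j = 0.
Proof.
move=> hA; rewrite /op_sub gram_pivot_vec //.
have [App0|App0] := eqVneq (A p p) 0; first by rewrite psd_row0 // !mulr0 mul0r subr0.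
by rewrite mulrAC divff // mul1r subrr.
Qed.

Lemma psd_eq_gram_on n (S : {set T}) A : #|S| = n -> psd A ->
  (forall i j, i \notin S -> A i j = 0) -> exists s, A = gram s.
Proof.
elim: n S A => [|n IH] S A cardS hA hS.
  by exists [::]; apply: op_ext => i j; rewrite hS ?(cards0_eq cardS) ?inE // /gram big_nil.
have [p Sp] : exists p, p \in S by apply/card_gt0P; rewrite cardS.
have [s hs] : exists s, op_sub A (gram [:: pivot_vec A p]) = gram s.
  apply: (IH (S :\ p)); last 2 first.
  - exact: psd_sub_pivot.
  - move=> i j; rewrite in_setD1 negb_and negbK => /orP[/eqP -> | iS].
      exact: sub_pivot_row0.
    by rewrite /op_sub gram_pivot_vec // (hS i j) // (hS i p) // !mul0r subr0.
  by move: cardS; rewrite (cardsD1 p) Sp => -[].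
exists (pivot_vec A p :: s); apply: op_ext => i j.
have := congr1 (fun B => B i j) hs; rewrite /op_sub /gram big_seq1 big_cons => <-.
by rewrite addrC subrK.
Qed.

Lemma psd_eq_gram A : psd A -> exists s, A = gram s.
Proof. by move=> hA; apply: (psd_eq_gram_on (S := setT)) => // i j; rewrite inE. Qed.

Lemma op_tr_mulZr a A B : op_tr (op_mul A (op_scale a B)) = a * op_tr (op_mul A B).
Proof.
rewrite /op_tr /op_mul mulr_sumr; apply: eq_bigr => i _; rewrite mulr_sumr.
by apply: eq_bigr => j _; rewrite /op_scale mulrCA.
Qed.

Lemma op_tr_mul_gram A s : op_tr (op_mul A (gram s)) = \sum_(f <- s) op_form A f f.
Proof.
rewrite /op_tr /op_mul /op_form [RHS]exchange_big /=; apply: eq_bigr => i _.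
rewrite [RHS]exchange_big /=; apply: eq_bigr => j _.
by rewrite /gram mulr_sumr; apply: eq_bigr => f _; ring.
Qed.

Lemma op_tr_mul_psd_ge0 A B : psd A -> psd B -> 0 <= op_tr (op_mul A B).
Proof.
move=> hA /psd_eq_gram [s ->]; rewrite op_tr_mul_gram.
by apply: sumr_ge0 => f _; apply: psd_form.
Qed.

Lemma psd_hadamard A B : psd A -> psd B -> psd (fun i j => A i j * B i j).
Proof.
move=> /psd_eq_gram [s ->] hB v; rewrite -/(op_form _ v v).
have -> : op_form (fun i j => gram s i j * B i j) v v =
    \sum_(f <- s) op_form B (fun i => (f i)^* * v i) (fun i => (f i)^* * v i).
  rewrite /op_form [RHS]exchange_big /=; apply: eq_bigr => i _.
  rewrite [RHS]exchange_big /=; apply: eq_bigr => j _.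
  rewrite /gram mulr_suml mulr_sumr mulr_suml; apply: eq_bigr => f _.
  by rewrite rmorphM /= conjCK; ring.
by apply: sumr_ge0 => f _; apply: psd_form.
Qed.

End PsdOperators.

Section Tensor.
Variables (C : numClosedFieldType) (I : finType) (T_ : I -> finType).
Notation TT := {dffun forall i, T_ i}.

Lemma psd_lift l (A : op C (T_ l)) : psd A -> psd (fun a b : TT => A (a l) (b l)).
Proof.
move=> /psd_eq_gram [s ->].
have -> : (fun a b : TT => gram s (a l) (b l)) = gram [seq (fun a : TT => f (a l)) | f <- s].
  by apply: op_ext => a b; rewrite /gram big_map.
exact: psd_gram.
Qed.

Lemma psd_prod (r : seq I) (A : forall l, op C (T_ l)) : (forall l, psd (A l)) ->
  psd (fun a b : TT => \prod_(l <- r) A l (a l) (b l)).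
Proof.
move=> hA; elim: r => [|l r IH].
  have -> : (fun a b : TT => \prod_(l <- [::]) A l (a l) (b l)) = gram [:: fun _ => 1].
    by apply: op_ext => a b; rewrite /gram !big_seq1 big_nil rmorph1 mulr1.
  exact: psd_gram.
have -> : (fun a b : TT => \prod_(k <- l :: r) A k (a k) (b k))
        = fun a b => A l (a l) (b l) * \prod_(k <- r) A k (a k) (b k).
  by apply: op_ext => a b; rewrite big_cons.
exact: psd_hadamard (psd_lift (hA l)) IH.
Qed.

Lemma psd_prod_sub (r : seq I) (A B : forall l, op C (T_ l)) :
  (forall l, psd (B l)) -> (forall l, psd (op_sub (A l) (B l))) ->
  psd (op_sub (fun a b : TT => \prod_(l <- r) A l (a l) (b l))
              (fun a b : TT => \prod_(l <- r) B l (a l) (b l))).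
Proof.
move=> hB hAB; have hA l : psd (A l).
  by have := psd_add (hAB l) (hB l); congr psd; apply: op_ext => x y; rewrite /op_add subrK.
elim: r => [|l r IH].
  have -> : op_sub (fun a b : TT => \prod_(l <- [::]) A l (a l) (b l))
                   (fun a b : TT => \prod_(l <- [::]) B l (a l) (b l)) = fun _ _ => 0.
    by apply: op_ext => a b; rewrite /op_sub !big_nil subrr.
  exact: psd0.
(* [a X - b Y = (a - b) X + b (X - Y)] *)
have -> : op_sub (fun a b : TT => \prod_(k <- l :: r) A k (a k) (b k))
                 (fun a b : TT => \prod_(k <- l :: r) B k (a k) (b k))
        = op_add (fun a b : TT => op_sub (A l) (B l) (a l) (b l) * \prod_(k <- r) A k (a k) (b k))
                 (fun a b : TT => B l (a l) (b l) * op_sub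
                     (fun x y : TT => \prod_(k <- r) A k (x k) (y k))
                     (fun x y : TT => \prod_(k <- r) B k (x k) (y k)) a b).
  by apply: op_ext => a b; rewrite /op_add /op_sub !big_cons; ring.
apply: psd_add; apply: psd_hadamard.
- exact: psd_lift (hAB l).
- exact: psd_prod.
- exact: psd_lift (hB l).
- exact: IH.
Qed.

End Tensor.

Lemma big_distr_dffun (R : comPzSemiRingType) (I : finType) (T_ : I -> finType)
    (F : forall i, T_ i -> R) :
  \prod_i \sum_(j : T_ i) F i j = \sum_(a : {dffun forall i, T_ i}) \prod_i F i (a i).
Proof.
pose P_ i := [ffun j : T_ i => F i j].
rewrite (reindex (@dffun_of_fprod I T_)); last exact/onW_bij/dffun_of_fprod_bij.
have := @big_fprod R 0 1 *%R +%R I T_ P_.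
have -> : \sum_(t : fprod T_) \prod_i F i (dffun_of_fprod t i)
        = \sum_(t : fprod T_) \prod_(i in I) P_ i (t i).
  by apply: eq_bigr => t _; apply: eq_bigr => i _; rewrite /P_ !ffunE.
move=> ->; under eq_bigr => i _ do rewrite (big_tag (fun i j => F i j) i).
rewrite bigA_distr_big_dep; apply: eq_bigr => g _; apply: eq_bigr => i _.
by rewrite /P_ /untag; case: eqP => // e; rewrite ffunE.
Qed.

Section TensorOp.
Variables (C : numClosedFieldType) (L : nat) (d : 'I_L -> nat).
Implicit Types A B : forall l, op C 'I_(d l).

Lemma op_tr_mul_tensor A B :
  op_tr (op_mul (tensor_op A) (tensor_op B)) = \prod_l op_tr (op_mul (A l) (B l)).
Proof.
rewrite /op_tr /op_mul /tensor_op big_distr_dffun; apply: eq_bigr => a _.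
rewrite (big_distr_dffun (fun l k => A l (a l) k * B l k (a l))).
by apply: eq_bigr => b _; rewrite big_split.
Qed.

Lemma tensor_op_id : tensor_op (fun l => @op_id C 'I_(d l)) = @op_id C _.
Proof.
apply: op_ext => a b; rewrite /tensor_op /op_id.
have [<-|neq_ab] := eqVneq a b; first by rewrite big1 // => l _; rewrite eqxx.
have [l neq_l] : exists l, a l != b l.
  apply/existsP; rewrite -negb_forall; apply: contra neq_ab => /forallP eq_ab.
  by apply/eqP/ffunP => l; apply/eqP.
by rewrite (bigD1 l) //= (negbTE neq_l) mul0r.
Qed.

Lemma psd_tensor A : (forall l, psd (A l)) -> psd (tensor_op A).
Proof. exact: psd_prod. Qed.

Lemma psd_tensor_sub A B : (forall l, psd (B l)) -> (forall l, psd (op_sub (A l) (B l))) ->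
  psd (op_sub (tensor_op A) (tensor_op B)).
Proof. exact: psd_prod_sub. Qed.

Lemma avg_state_seq (n : 'I_L -> nat) (eta : forall l, 'I_(n l) -> C)
    (rho : forall l, 'I_(n l) -> op C 'I_(d l)) :
  avg_state (seq_eta eta) (seq_rho rho) = tensor_op (fun l => avg_state (eta l) (rho l)).
Proof.
apply: op_ext => a b; rewrite /tensor_op /avg_state big_distr_dffun.
by apply: eq_bigr => c _; rewrite big_split.
Qed.

End TensorOp.

Lemma sum_option (V : nmodType) (I : finType) (F : option I -> V) :
  \sum_(o : option I) F o = F None + \sum_i F (Some i).
Proof.
rewrite (bigD1 None) //=; congr (_ + _).
rewrite (reindex_omap Some (fun o => o)); last by case.
by apply: eq_bigl => i; rewrite eqxx.
Qed.

Section Measurements.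
Variables (C : numClosedFieldType) (I T : finType).
Implicit Types (P : op C T) (M : option I -> op C T).

Definition binary_meas (x : I) P : option I -> op C T :=
  fun o => match o with
           | None => op_sub (@op_id C T) P
           | Some y => if y == x then P else fun _ _ => 0
           end.

Lemma binary_measP x P : psd P -> psd (op_sub (@op_id C T) P) -> measurement (binary_meas x P).
Proof.
move=> hP hIP; split=> [[y|] //=|a b]; first by case: eqP => _; [exact: hP | exact: psd0].
rewrite sum_option /= (bigD1 x) //= eqxx big1 => [|y /negbTE -> //].
by rewrite /op_sub addr0 subrK.
Qed.

Lemma psd_id_sub_meas M x : measurement M -> psd (op_sub (@op_id C T) (M (Some x))).
Proof.
move=> [M_psd M_sum].
have -> : op_sub (@op_id C T) (M (Some x)) = fun a b => \sum_(o | o != Some x) M o a b.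
  apply: op_ext => a b; rewrite /op_sub -M_sum (bigD1 (Some x)) //=.
  by rewrite addrC addrK.
exact: psd_sum.
Qed.

End Measurements.

Section Confidence.
Variables (C : numClosedFieldType) (I T : finType) (eta : I -> C) (rho : I -> op C T).

Definition conf_gap x c : op C T :=
  op_add (op_scale c (avg_state eta rho)) (op_scale (- eta x) (rho x)).

Lemma op_tr_conf_gap x c N : op_tr (op_mul (conf_gap x c) N)
  = c * op_tr (op_mul (avg_state eta rho) N) - eta x * op_tr (op_mul (rho x) N).
Proof.
rewrite /op_tr /op_mul !mulr_sumr -sumrB; apply: eq_bigr => i _.
by rewrite !mulr_sumr -sumrB; apply: eq_bigr => j _; rewrite /conf_gap /op_add /op_scale; ring.
Qed.

Lemma confidence_le_of_psd_gap x c N : psd (conf_gap x c) -> measurement N ->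
  0 < op_tr (op_mul (avg_state eta rho) (N (Some x))) ->
  eta x * op_tr (op_mul (rho x) (N (Some x))) / op_tr (op_mul (avg_state eta rho) (N (Some x)))
    <= c.
Proof.
move=> gap_psd [N_psd _] tr_gt0; rewrite ler_pdivrMr // -subr_ge0 -op_tr_conf_gap.
exact: op_tr_mul_psd_ge0.
Qed.

Lemma op_form_avg_state v :
  op_form (avg_state eta rho) v v = \sum_k eta k * op_form (rho k) v v.
Proof.
by rewrite (op_form_sum _ (fun k => op_scale (eta k) (rho k))); under eq_bigr do rewrite op_formZ.
Qed.

Lemma psd_conf_gap x c : ensemble eta rho -> is_max_confidence eta rho x c ->
  psd (conf_gap x c).
Proof.
move=> [eta_gt0 [_ rho_density]] [_ c_ub] v.
rewrite -/(op_form _ v v) op_formD !op_formZ mulNr subr_ge0.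
have rho_psd k : psd (rho k) by case: (rho_density k).
set q0 := op_form (avg_state eta rho) v v.
have qx_le : eta x * op_form (rho x) v v <= q0.
  rewrite /q0 op_form_avg_state (bigD1 x) //= lerDl.
  by apply: sumr_ge0 => k _; apply: mulr_ge0; [exact: ltW | exact: psd_form].
have [q0_0|q0_neq0] := eqVneq q0 0; first by move: qx_le; rewrite q0_0 mulr0.
have q0_gt0 : 0 < q0.
  rewrite lt_def q0_neq0 (le_trans _ qx_le) // mulr_ge0 ?psd_form //.
  exact: ltW.
set s := vdot v v.
have s_gt0 : 0 < s.
  rewrite lt_def {2}/s -op_form_id psd_form ?andbT; last exact: psd_id.
  apply: contra_neq q0_neq0 => /vdot_eq0 v0; rewrite /q0 /op_form big1 // => i _.
  by rewrite big1 // => j _; rewrite !v0 mulr0.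
pose P := op_scale s^-1 (gram [:: v]).
have P_psd : psd P by apply: psd_scale; [rewrite invr_ge0 ltW | exact: psd_gram].
have := c_ub _ (binary_measP x P_psd (psd_id_sub_rank1 v)).
rewrite /= eqxx !op_tr_mulZr !op_tr_mul_gram !big_seq1 -/q0 pmulr_rgt0 ?invr_gt0 //.
move=> /(_ q0_gt0); rewrite -ler_pdivrMr //.
suff -> : eta x * (s^-1 * op_form (rho x) v v) / (s^-1 * q0)
          = eta x * op_form (rho x) v v / q0 by [].
by field; rewrite q0_neq0 gt_eqF.
Qed.

End Confidence.

Section SequenceConfidence.
Local Unset Implicit Arguments.
Variables (C : numClosedFieldType) (L : nat) (n d : 'I_L -> nat).
Variables (eta : forall l, 'I_(n l) -> C) (rho : forall l, 'I_(n l) -> op C 'I_(d l)).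
Variables (c : {dffun forall l, 'I_(n l)}) (Cl : 'I_L -> C).

Lemma conf_gap_seq : conf_gap (seq_eta eta) (seq_rho rho) c (\prod_l Cl l)
  = op_sub (tensor_op (fun l => op_scale (Cl l) (avg_state (eta l) (rho l))))
           (tensor_op (fun l => op_scale (eta l (c l)) (rho l (c l)))).
Proof.
rewrite /conf_gap avg_state_seq; apply: op_ext => a b.
by rewrite /op_add /op_sub /op_scale /seq_eta /seq_rho /tensor_op !big_split mulNr.
Qed.

Lemma op_tr_conf_gap_seq (A : forall l, op C 'I_(d l)) :
  (forall l, op_tr (op_mul (conf_gap (eta l) (rho l) (c l) (Cl l)) (A l)) = 0) ->
  op_tr (op_mul (conf_gap (seq_eta eta) (seq_rho rho) c (\prod_l Cl l)) (tensor_op A)) = 0.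
Proof.
move=> gap0; rewrite op_tr_conf_gap avg_state_seq !op_tr_mul_tensor /seq_eta -!big_split /=.
apply/eqP; rewrite subr_eq0; apply/eqP; apply: eq_bigr => l _.
by apply/eqP; rewrite -subr_eq0 -op_tr_conf_gap gap0.
Qed.

Hypothesis ensemble_l : forall l, ensemble (eta l) (rho l).
Hypothesis confidence_l : forall l, is_max_confidence (eta l) (rho l) (c l) (Cl l).

Lemma psd_conf_gap_seq : psd (conf_gap (seq_eta eta) (seq_rho rho) c (\prod_l Cl l)).
Proof.
rewrite conf_gap_seq; apply: psd_tensor_sub => l.
  have [eta_gt0 [_ /(_ (c l)) [rho_psd _]]] := ensemble_l l.
  exact: psd_scale (ltW (eta_gt0 _)) rho_psd.
have -> : op_sub (op_scale (Cl l) (avg_state (eta l) (rho l)))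
                 (op_scale (eta l (c l)) (rho l (c l)))
        = conf_gap (eta l) (rho l) (c l) (Cl l).
  by apply: op_ext => x y; rewrite /op_sub /conf_gap /op_add /op_scale mulNr.
exact: psd_conf_gap.
Qed.

Lemma confidence_seq_attained : exists N, measurement N /\
  0 < op_tr (op_mul (avg_state (seq_eta eta) (seq_rho rho)) (N (Some c))) /\
  seq_eta eta c * op_tr (op_mul (seq_rho rho c) (N (Some c))) /
    op_tr (op_mul (avg_state (seq_eta eta) (seq_rho rho)) (N (Some c))) = \prod_l Cl l.
Proof.
have [Nl Nl_conf] :=
  non_dep_dep_functional_choice functional_choice _ _ (fun l => (confidence_l l).1).
pose P l := Nl l (Some (c l)).
have P_psd l : psd (P l) by case: (Nl_conf l) => [[/(_ (Some (c l)))]].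
exists (binary_meas c (tensor_op P)); split; last split.
- apply: binary_measP; first exact: psd_tensor.
  rewrite -tensor_op_id; apply: psd_tensor_sub => // l.
  by apply: psd_id_sub_meas; case: (Nl_conf l).
- rewrite /= eqxx avg_state_seq op_tr_mul_tensor; apply: prodr_gt0 => l _.
  by case: (Nl_conf l) => _ [].
- rewrite /= eqxx avg_state_seq !op_tr_mul_tensor -big_split -prodf_div.
  by apply: eq_bigr => l _; case: (Nl_conf l) => _ [].
Qed.

Lemma is_max_confidence_seq :
  is_max_confidence (seq_eta eta) (seq_rho rho) c (\prod_l Cl l).
Proof.
split; first exact: confidence_seq_attained.
by move=> N; apply: confidence_le_of_psd_gap psd_conf_gap_seq.
Qed.

End SequenceConfidence.

Theorem theorem5 (R : realType) (L : nat) (n d : 'I_L -> nat)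
    (eta : forall l, 'I_(n l) -> R[i])
    (rho : forall l, 'I_(n l) -> op R[i] 'I_(d l))
    (Ml : forall l, option 'I_(n l) -> op R[i] 'I_(d l))
    (M : option {dffun forall l : 'I_L, 'I_(n l)} ->
           op R[i] {dffun forall l : 'I_L, 'I_(d l)}) :
  (0 < L)%N ->
  (forall l, ensemble (eta l) (rho l)) ->
  (forall l, max_confidence_measurement (eta l) (rho l) (Ml l)) ->
  measurement M ->
  (forall c : {dffun forall l : 'I_L, 'I_(n l)},
      M (Some c) = tensor_op (fun l => Ml l (Some (c l)))) ->
  max_confidence_measurement (seq_eta eta) (seq_rho rho) M.
Proof.
move=> _ ensemble_l Ml_mc M_meas M_tensor; split=> // c.
have [Cl Cl_spec] := functional_choice _ (fun l => (Ml_mc l).2 (c l)).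
exists (\prod_l Cl l); split.
  by apply: is_max_confidence_seq => // l; case: (Cl_spec l).
by rewrite M_tensor; apply: op_tr_conf_gap_seq => l; case: (Cl_spec l).
Qed.
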